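(* There is a function $s$ with $s(p)=2^{\mathcal{O}(p^3)}$ such that for every graph $G$ of vertex integrity $p$ and every set $\mathcal{B}$ of balls of $G$, the positive non-clashing teaching dimension of $\mathcal{B}$ is at most $s(p)$.
   Context: For a graph $G$, $r\ge 0$ and $v\in V(G)$, the ball $B_r(v)$ is the set of vertices at distance at most $r$ from $v$. For a set $\mathcal{B}$ of balls of $G$, a positive teaching map $T$ assigns to each $B\in\mathcal{B}$ a set $T(B)\subseteq B$; its dimension is $\max_{B\in\mathcal{B}}|T(B)|$; $T$ is non-clashing if for every pair of distinct $B_1,B_2\in\mathcal{B}$ there is $w\in T(B_1)\cup T(B_2)$ with $w\notin B_1\cap B_2$. The positive non-clashing teaching dimension of $\mathcal{B}$ is the minimum dimension of a positive non-clashing teaching map for $\mathcal{B}$. The vertex integrity of $G$ is the minimum $b$ such that there is $X\subset V(G)$ with $|V(H)\cup X|\le b$ for every connected component $H$ of $G-X$. *)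

From mathcomp Require Import all_boot.
Set Implicit Arguments. Unset Strict Implicit. Unset Printing Implicit Defensive.

Section Graphs.
Variable T : finType.

Definition simple_graph (e : rel T) : Prop := symmetric e /\ irreflexive e.

Fixpoint ball (e : rel T) (r : nat) (v : T) : {set T} :=
  match r with
  | 0 => [set v]
  | r'.+1 => ball e r' v :|: [set w | [exists u in ball e r' v, e u w]]
  end.

Definition is_ball (e : rel T) (B : {set T}) : Prop :=
  exists (r : nat) (v : T), B = ball e r v.

(* Connected component of v in G - X (meaningful for v \notin X). *)
Definition comp_minus (e : rel T) (X : {set T}) (v : T) : {set T} :=
  [set w | connect [rel x y | [&& e x y, x \notin X & y \notin X]] v w].

(* b is an admissible bound: some X with |V(H) u X| <= b for every component H
   of G - X (and |X| <= b, covering the case where G - X is empty). *)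
Definition vi_bound (e : rel T) (b : nat) : Prop :=
  exists X : {set T}, #|X| <= b /\
    forall v, v \notin X -> #|comp_minus e X v :|: X| <= b.

Definition vertex_integrity_eq (e : rel T) (p : nat) : Prop :=
  vi_bound e p /\ forall b, b < p -> ~ vi_bound e b.

Definition positive_map (Bs : {set {set T}}) (Tm : {set T} -> {set T}) : Prop :=
  forall B, B \in Bs -> Tm B \subset B.

Definition non_clashing (Bs : {set {set T}}) (Tm : {set T} -> {set T}) : Prop :=
  forall B1 B2, B1 \in Bs -> B2 \in Bs -> B1 != B2 ->
    exists2 w, w \in Tm B1 :|: Tm B2 & w \notin B1 :&: B2.

Definition map_dim_le (Bs : {set {set T}}) (Tm : {set T} -> {set T}) (k : nat) : Prop :=
  forall B, B \in Bs -> #|Tm B| <= k.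

(* The positive non-clashing teaching dimension of Bs is at most k
   (the minimum over maps of the dimension is <= k iff some map has dimension <= k). *)
Definition pnctd_le (Bs : {set {set T}}) (k : nat) : Prop :=
  exists Tm : {set T} -> {set T},
    [/\ positive_map Bs Tm, non_clashing Bs Tm & map_dim_le Bs Tm k].

End Graphs.

From mathcomp Require Import all_boot zify.
Set Implicit Arguments. Unset Strict Implicit. Unset Printing Implicit Defensive.

(** Let X witness vertex integrity p: #|X| <= p and every component C of G - X
    has #|C :|: X| <= p. In a ball B = ball r v, a vertex w outside X and outside
    the component of v is reached by a shortest path that enters the component of
    w from some x in X; the rest of the path stays in that component, so
    w \in ball b x for some b <= p, and ball b x \subset B. Hence the balls
    containing such a w are governed by its profile, the set of pairs (x, b) with
    x \in X, b <= p and w \in ball b x. For each of the at most 2 ^ (p * p.+1)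
    profiles keep two whole components meeting its class, and teach
    B = ball r v by its vertices lying in X, in the component of v, or in a kept
    component. If these all lie in a ball B' = ball r' v' and w \in B is none of
    them, then some kept w' with the profile of w avoids the component of v';
    now w' \in B, hence w' \in B', and by the same argument in B', w \in B'. *)

Section Balls.
Variables (T : finType) (f : rel T).

Lemma ball_edge r v y w : y \in ball f r v -> f y w -> w \in ball f r.+1 v.
Proof.
move=> yB fyw; rewrite /= in_setU inE; apply/orP; right.
by apply/existsP; exists y; rewrite yB.
Qed.

Lemma ball_subset_radius r r' v : r <= r' -> ball f r v \subset ball f r' v.
Proof.
move=> le_rr'; rewrite -(subnK le_rr'); elim: (r' - r) => [|k IH] //=.
exact: subset_trans IH (subsetUl _ _).
Qed.

Lemma ball_trans a b v x w :
  x \in ball f a v -> w \in ball f b x -> w \in ball f (a + b) v.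
Proof.
move=> xB; elim: b w => [|b IH] w /=; first by rewrite addn0 inE => /eqP ->.
rewrite addnS in_setU => /orP[/IH|]; first exact/subsetP/ball_subset_radius.
by rewrite inE => /existsP[y /andP[/IH yB fyw]]; apply: ball_edge yB fyw.
Qed.

Lemma path_last_ball v s : path f v s -> last v s \in ball f (size s) v.
Proof.
elim/last_ind: s => [|s y IH]; first by rewrite /= inE.
by rewrite rcons_path last_rcons size_rcons => /andP[/IH yB fy]; apply: ball_edge yB fy.
Qed.

Lemma ball_path r v w :
  w \in ball f r v -> exists2 s, path f v s & last v s = w /\ size s <= r.
Proof.
elim: r w => [|r IH] w /=; first by rewrite inE => /eqP ->; exists [::].
rewrite in_setU => /orP[/IH[s fs [<- le_sr]]|].
  by exists s; last split; rewrite ?leqW.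
rewrite inE => /existsP[y /andP[/IH[s fs [ys le_sr]] fyw]].
by exists (rcons s w); rewrite ?rcons_path ?fs ?ys ?last_rcons ?size_rcons.
Qed.

Lemma connect_ball_card u w :
  connect f u w -> w \in ball f #|[set y | connect f u y]|.-1 u.
Proof.
case/connectP=> s fs ->; case: (shortenP fs) => s' fs' uniq_s' _.
apply: (subsetP (ball_subset_radius _ _)) (path_last_ball fs').
rewrite -ltnS -[(size s').+1]/(size (u :: s')) -(card_uniqP uniq_s') prednK.
  by apply/subset_leq_card/subsetP => y /(path_connect fs'); rewrite inE.
by apply/card_gt0P; exists u; rewrite inE connect0.
Qed.

Lemma ball_connect r v w : w \in ball f r v -> connect f v w.
Proof. by case/ball_path => s fs [<- _]; apply/connectP; exists s. Qed.

End Balls.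

Lemma sub_ball (T : finType) (f g : rel T) r v :
  subrel f g -> ball f r v \subset ball g r v.
Proof.
move=> fg; apply/subsetP; elim: r => [|r IH] w //=.
rewrite in_setU => /orP[/IH wB|]; first by rewrite in_setU wB.
by rewrite inE => /existsP[y /andP[/IH yB /fg gyw]]; apply: ball_edge yB gyw.
Qed.

Lemma ball_centers (T : finType) (e : rel T) (Bs : {set {set T}}) (v0 : T) :
  (forall B, B \in Bs -> is_ball e B) ->
  exists c : {set T} -> T, forall B, B \in Bs -> exists r, B = ball e r (c B).
Proof.
move=> Bs_balls.
apply: (fin_all_exists (P := fun B v => B \in Bs -> exists r, B = ball e r v)) => B.
case: (boolP (B \in Bs)) => [/Bs_balls[r [v ->]] | BNs]; first by exists v; exists r.
by exists v0.
Qed.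

Section FinsetFacts.
Variable U : finType.

Lemma card_bigcup_leq (I : finType) (P : {set I}) (F : I -> {set U}) k :
  (forall i, i \in P -> #|F i| <= k) -> #|\bigcup_(i in P) F i| <= #|P| * k.
Proof.
move=> card_F; rewrite -sum_nat_const.
elim/big_rec2: _ => [|i A n Pi IH]; first by rewrite cards0.
exact: leq_trans (leq_card_setU _ _) (leq_add (card_F i Pi) IH).
Qed.

Definition trunc_set n (A : {set U}) : {set U} := [set x in take n (enum A)].

Lemma trunc_set_sub n A : trunc_set n A \subset A.
Proof. by apply/subsetP => x; rewrite inE => /mem_take; rewrite mem_enum. Qed.

Lemma card_trunc_set n A : #|trunc_set n A| <= n.
Proof. by rewrite cardsE (leq_trans (card_size _)) // size_take_min geq_minl. Qed.

Lemma trunc_set_avoid n (A F : {set U}) a :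
  a \in A -> a \notin trunc_set n A -> #|F| < n ->
  exists2 x, x \in trunc_set n A & x \notin F.
Proof.
move=> aA aNtrunc lt_Fn.
have lt_nA : n < size (enum A).
  rewrite ltnNge; apply: contra aNtrunc => /take_oversize takeA.
  by rewrite inE takeA mem_enum.
have card_trunc : #|trunc_set n A| = n.
  by rewrite cardsE (card_uniqP (take_uniq _ (enum_uniq _))) size_takel // ltnW.
by apply/subsetPn/negP => /subset_leq_card; rewrite card_trunc leqNgt lt_Fn.
Qed.

End FinsetFacts.

Lemma non_clashing_of_subset (T : finType) (Bs : {set {set T}})
    (Tm : {set T} -> {set T}) :
  (forall B1 B2, B1 \in Bs -> B2 \in Bs -> Tm B1 \subset B2 -> B1 \subset B2) ->
  non_clashing Bs Tm.
Proof.
move=> TmP B1 B2 B1s B2s neqB.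
have [/exists_inP[w TmBw wN] | /exists_inPn noW] :=
  boolP [exists w in Tm B1 :|: Tm B2, w \notin B1 :&: B2]; first by exists w.
have TmB_sub : Tm B1 :|: Tm B2 \subset B1 :&: B2.
  by apply/subsetP => w /noW; rewrite negbK.
have TmB1 := subset_trans (subset_trans (subsetUl _ _) TmB_sub) (subsetIr B1 B2).
have TmB2 := subset_trans (subset_trans (subsetUr _ _) TmB_sub) (subsetIl B1 B2).
by rewrite eqEsubset (TmP B1 B2) ?(TmP B2 B1) in neqB.
Qed.

Section Separator.
Variables (T : finType) (e : rel T) (X : {set T}).

Definition minus_rel : rel T := [rel x y | [&& e x y, x \notin X & y \notin X]].
Local Notation comp := (comp_minus e X).

Lemma comp_refl v : v \in comp v.
Proof. by rewrite inE connect0. Qed.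

Lemma comp_separator v : v \in X -> comp v = [set v].
Proof.
move=> vX; apply/setP => w; rewrite !inE.
apply/idP/eqP => [/connectP[[|y s] //=] | ->]; last exact: connect0.
by rewrite vX andbF.
Qed.

Lemma mem_comp_eq : symmetric e -> forall v w, (w \in comp v) = (comp w == comp v).
Proof.
move=> sym_e v w; have sym_minus : connect_sym minus_rel.
  by apply: sym_connect_sym => x y; rewrite /minus_rel /= sym_e (andbC (x \notin X)).
apply/idP/eqP => [| <-]; last exact: comp_refl.
by rewrite inE => vw; apply/setP => y; rewrite !inE (same_connect sym_minus vw).
Qed.

Lemma ball_through_separator r v w : w \in ball e r v -> w \notin X ->
  w \in comp v \/ exists x u a k, [/\ x \in X, x \in ball e a v, e x u, u \notin X &
                                     w \in ball minus_rel k u /\ a + k < r].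
Proof.
elim: r w => [|r IH] w /=; first by rewrite inE => /eqP -> _; left; apply: comp_refl.
rewrite in_setU => /orP[wB wNX | ].
  case: (IH w wB wNX) => [|[x [u [a [k [xX xB exu uNX [wBu lt_akr]]]]]]]; first by left.
  by right; exists x, u, a, k; split => //; split; last exact: ltnW.
rewrite inE => /existsP[y /andP[yB eyw]] wNX.
have [yX | yNX] := boolP (y \in X).
  by right; exists y, w, r, 0; rewrite addn0 /= inE.
case: (IH y yB yNX) => [yC | [x [u [a [k [xX xB exu uNX [yBu lt_akr]]]]]]].
  left; move: yC; rewrite !inE => /connect_trans; apply; apply: connect1.
  by rewrite /minus_rel /= eyw yNX.
right; exists x, u, a, k.+1; split => //; split; last by rewrite addnS.
by apply: ball_edge yBu _; rewrite /minus_rel /= eyw yNX.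
Qed.

Variable p : nat.
Hypothesis comp_small : forall v, v \notin X -> #|comp v :|: X| <= p.

Lemma card_comp v : v \notin X -> #|comp v| <= p.
Proof. by move/comp_small; apply: leq_trans; rewrite subset_leq_card ?subsetUl. Qed.

Lemma card_separator_comp v : #|X| <= p -> #|X :|: comp v| <= p.
Proof.
move=> card_X; have [vX | vNX] := boolP (v \in X); last by rewrite setUC comp_small.
by rewrite comp_separator // (setUidPl _) // sub1set.
Qed.

Lemma ball_outside_component r v w :
  w \in ball e r v -> w \notin X -> w \notin comp v ->
  exists x b, [/\ x \in X, b <= p, w \in ball e b x & ball e b x \subset ball e r v].
Proof.
move=> wB wNX wNC; case: (ball_through_separator wB wNX) => [/(negP wNC)//|].
case=> x [u [a [k [xX xB exu uNX [wBu lt_akr]]]]].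
have [k' [le_k'k lt_k'C wBu']] :
    exists k', [/\ k' <= k, k' < #|comp u| & w \in ball minus_rel k' u].
  have wBm := connect_ball_card (ball_connect wBu).
  have C_gt0 : 0 < #|comp u| by apply/card_gt0P; exists u; apply: comp_refl.
  have [le_km | lt_mk] := leqP k (#|comp u|.-1).
    by exists k; rewrite -ltnS prednK in le_km.
  by exists (#|comp u|.-1); rewrite prednK // ltnW.
exists x, k'.+1; split => //.
- exact: leq_trans lt_k'C (card_comp uNX).
- rewrite -add1n; apply: ball_trans (ball_edge _ exu) _; first by rewrite inE.
  by apply: (subsetP (sub_ball k' u _)) wBu' => y z /and3P[].
- apply/subsetP => y /(ball_trans xB); apply/subsetP/ball_subset_radius.
  by rewrite (leq_trans _ lt_akr) // -addnS leq_add2l ltnS.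
Qed.

End Separator.

Definition teaching_bound p := p + 2 * p * 2 ^ (p * p.+1).

Section Teaching.
Variables (T : finType) (e : rel T) (X : {set T}) (p : nat).
Local Notation comp := (comp_minus e X).

Definition profile (w : T) : {set T * 'I_p.+1} :=
  [set xk : T * 'I_p.+1 | (xk.1 \in X) && (w \in ball e xk.2 xk.1)].

Definition profile_class pi : {set T} := [set w | (w \notin X) && (profile w == pi)].

Definition class_comps pi : {set {set T}} := [set comp w | w in profile_class pi].

Definition representatives : {set T} :=
  \bigcup_(pi in powerset (setX X setT)) \bigcup_(C in trunc_set 2 (class_comps pi)) C.

Definition teaching_set v : {set T} := X :|: comp v :|: representatives.

Lemma profile_ball w w' x b : profile w = profile w' -> x \in X -> b <= p ->
  w \in ball e b x -> w' \in ball e b x.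
Proof.
move=> prof_ww' xX le_bp wB.
have : (x, inord b : 'I_p.+1) \in profile w by rewrite inE /= xX inordK.
by rewrite prof_ww' inE /= inordK // => /andP[].
Qed.

Hypothesis sym_e : symmetric e.

Lemma representatives_avoid w v : w \notin X -> w \notin representatives ->
  exists w', [/\ profile w' = profile w, w' \notin X, w' \in representatives
                 & w' \notin comp v].
Proof.
move=> wNX wNR; set pi := profile w.
have pi_sub : pi \in powerset (setX X setT).
  by rewrite powersetE; apply/subsetP => -[x k]; rewrite !inE /= andbT => /andP[].
have sub_R C : C \in trunc_set 2 (class_comps pi) -> C \subset representatives.
  by move=> Ctrunc; apply: subset_trans (bigcup_sup _ pi_sub); apply: bigcup_sup.
have wC : comp w \in class_comps pi by apply: imset_f; rewrite inE wNX eqxx.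
have wNtrunc : comp w \notin trunc_set 2 (class_comps pi).
  by apply: contra wNR => /sub_R/subsetP; apply; apply: comp_refl.
have card_F : #|[set comp v]| < 2 by rewrite cards1.
have [C Ctrunc] := trunc_set_avoid wC wNtrunc card_F.
have /imsetP[w' w'class def_C] := subsetP (trunc_set_sub _ _) C Ctrunc; subst C.
rewrite !inE -(mem_comp_eq X sym_e) => w'NC.
move: w'class; rewrite inE => /andP[w'NX /eqP prof_w'].
exists w'; split=> //; apply: (subsetP (sub_R _ Ctrunc)); apply: comp_refl.
Qed.

Hypothesis comp_small : forall v, v \notin X -> #|comp v :|: X| <= p.

Lemma ball_subset_of_teaching r1 v1 B2 : is_ball e B2 ->
  ball e r1 v1 :&: teaching_set v1 \subset B2 -> ball e r1 v1 \subset B2.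
Proof.
case=> r2 [v2 ->] teachB; apply/subsetP => w wB1.
have [wT | ] := boolP (w \in teaching_set v1).
  by apply: (subsetP teachB); rewrite inE wB1.
rewrite !in_setU negb_or => /andP[/norP[wNX wNC] wNR].
have [w' [prof_w' w'NX w'R w'NC]] := representatives_avoid v2 wNX wNR.
have [x [b [xX le_bp wBx Bx_sub]]] := ball_outside_component comp_small wB1 wNX wNC.
have w'B1 : w' \in ball e r1 v1.
  exact: (subsetP Bx_sub) (profile_ball (esym prof_w') xX le_bp wBx).
have w'B2 : w' \in ball e r2 v2.
  by apply: (subsetP teachB); rewrite in_setI w'B1 !in_setU w'R orbT.
have [x' [b' [x'X le_b'p w'Bx' Bx'_sub]]] :=
  ball_outside_component comp_small w'B2 w'NX w'NC.
exact: (subsetP Bx'_sub) (profile_ball prof_w' x'X le_b'p w'Bx').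
Qed.

Hypothesis card_X : #|X| <= p.

Lemma card_representatives : #|representatives| <= 2 * p * 2 ^ (p * p.+1).
Proof.
apply: leq_trans (card_bigcup_leq (k := 2 * p) _) _ => [pi _ | ].
  apply: leq_trans (card_bigcup_leq (k := p) _) _ => [C | ].
    move=> /(subsetP (trunc_set_sub _ _))/imsetP[w].
    by rewrite inE => /andP[wNX _] ->; apply: card_comp.
  by rewrite leq_mul2r card_trunc_set orbT.
rewrite card_powerset cardsX cardsT card_ord mulnC.
by rewrite leq_mul2l leq_exp2l // leq_mul2r card_X !orbT.
Qed.

Lemma card_teaching_set v : #|teaching_set v| <= teaching_bound p.
Proof.
apply: leq_trans (leq_card_setU _ _) _.
exact: leq_add (card_separator_comp comp_small v card_X) card_representatives.
Qed.

Lemma pnctd_le_balls (Bs : {set {set T}}) :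
  (forall B, B \in Bs -> is_ball e B) -> pnctd_le Bs (teaching_bound p).
Proof.
move=> Bs_balls; have [-> | [B0 B0s]] := set_0Vmem Bs.
  by exists (fun _ => set0); split => B; rewrite inE.
have [_ [v0 _]] := Bs_balls B0 B0s.
have [c c_center] := ball_centers v0 Bs_balls.
exists (fun B => B :&: teaching_set (c B)); split => [B _ | | B _].
- exact: subsetIl.
- apply: non_clashing_of_subset => B1 B2 B1s B2s.
  move: (c B1) (c_center _ B1s) => v1 [r1 ->].
  by apply: ball_subset_of_teaching; apply: Bs_balls.
- exact: leq_trans (subset_leq_card (subsetIr _ _)) (card_teaching_set _).
Qed.

End Teaching.

Lemma teaching_bound_le p : teaching_bound p <= 2 ^ (5 * p ^ 3).
Proof.
case: p => [//|q]; set p := q.+1.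
apply: (@leq_trans (2 ^ (p + 2 + p * p.+1))).
  have lt_p2p : p < 2 ^ p := ltn_expl p (isT : 1 < 2).
  have pow_gt0 : 0 < 2 ^ (p * p.+1) := expn_gt0 _ _.
  rewrite /teaching_bound !expnD; move: lt_p2p pow_gt0.
  move: (2 ^ p) (2 ^ (p * p.+1)) => P E; nia.
rewrite leq_exp2l // /p; nia.
Qed.

Theorem corollary10 :
  exists s : nat -> nat,
    (exists C N : nat, forall p, N <= p -> s p <= 2 ^ (C * p ^ 3)) /\
    forall (T : finType) (e : rel T) (p : nat) (Bs : {set {set T}}),
      simple_graph e ->
      vertex_integrity_eq e p ->
      (forall B, B \in Bs -> is_ball e B) ->
      pnctd_le Bs (s p).
Proof.
exists teaching_bound; split; first by exists 5, 0 => p _; apply: teaching_bound_le.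
move=> T e p Bs [sym_e _] [[X [card_X comp_small]] _].
exact: (pnctd_le_balls (X := X) sym_e comp_small card_X).
Qed.
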